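(* Let $X=(B\,|\,A)\in\mathbb{Z}^{d\times N}$ be a matrix of full rank $d$ in $B$-basic form, with $B\in\mathbb{Z}^{d\times d}$ a diagonal matrix of full rank with non-negative entries and $A\in\mathbb{Z}^{d\times(N-d)}$. Let $P=\{p_1,\dots,p_{N-\kappa(A)}\}$ be a coordinatizing path and $\sigma\in\{-1,1\}^{N-\kappa(A)}$. If $X'=(B\,|\,A')$ and $X''=(B\,|\,A'')$ both represent the same arithmetic matroid as $X$ and, for every $j$, the entries of $A'$ and of $A''$ at position $p_j$ both equal $\sigma_j$ times the corresponding entry of $A$, then $X'=X''$.
   Context: The arithmetic matroid represented by $X\in\mathbb{Z}^{d\times N}$ with columns $x_1,\dots,x_N$ is $([N],\operatorname{rk},m)$ where $\operatorname{rk}(S)$ is the dimension of the real span $\langle S\rangle_{\mathbb{R}}$ of $\{x_e:e\in S\}$ and $m(S)=|(\langle S\rangle_{\mathbb{R}}\cap\mathbb{Z}^d)/\langle S\rangle|$, with $\langle S\rangle$ the subgroup generated by $\{x_e:e\in S\}$. Index the columns of $A$ by $d+1,\dots,N$. Let $\mathcal{G}_A$ be the bipartite graph on vertices $\{r_1,\dots,r_d\}\cup\{c_{d+1},\dots,c_N\}$ with an edge $\{r_i,c_j\}$ iff $a_{ij}\ne 0$; edges are identified with the non-zero entries of $A$. $\kappa(A)$ is the number of connected components of $\mathcal{G}_A$. A coordinatizing path is the set of entries of $A$ corresponding to the edges of a spanning forest of $\mathcal{G}_A$. *)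

From HB Require Import structures.
From mathcomp Require Import all_boot all_order all_algebra.
From mathcomp Require Import Rstruct.
Set Implicit Arguments. Unset Strict Implicit. Unset Printing Implicit Defensive.
Import Order.TTheory GRing.Theory Num.Theory.
Local Open Scope ring_scope.

Notation realR := Rdefinitions.R.

Definition mxR (m n : nat) (M : 'M[int]_(m, n)) : 'M[realR]_(m, n) :=
  map_mx (fun z : int => z%:~R) M.

Section ArithmeticMatroid.
Variables (d N : nat) (X : 'M[int]_(d, N)).

Definition xcol (e : 'I_N) : 'cV[int]_d := col e X.

Definition arith_rk (S : {set 'I_N}) : nat :=
  \rank (\matrix_(e < N, i < d) if e \in S then (X i e)%:~R else (0 : realR)).

Definition in_real_span (S : {set 'I_N}) (v : 'cV[int]_d) : Prop :=
  exists c : 'I_N -> realR, mxR v = \sum_(e in S) c e *: mxR (xcol e).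

Definition in_subgroup (S : {set 'I_N}) (v : 'cV[int]_d) : Prop :=
  exists c : 'I_N -> int, v = \sum_(e in S) c e *: xcol e.

(* "m(S) = k": the quotient group (<S>_R cap Z^d) / <S> has exactly k
   elements, i.e. there is a complete, irredundant list of k representatives
   of its cosets. *)
Definition is_arith_mult (S : {set 'I_N}) (k : nat) : Prop :=
  exists reps : seq 'cV[int]_d,
    [/\ size reps = k,
        (forall r, r \in reps -> in_real_span S r),
        (forall i j, (i < k)%N -> (j < k)%N ->
           in_subgroup S (nth 0 reps i - nth 0 reps j) -> i = j) &
        (forall v, in_real_span S v ->
           exists2 r, r \in reps & in_subgroup S (v - r))].

End ArithmeticMatroid.

Definition same_arith_matroid (d N : nat) (X Y : 'M[int]_(d, N)) : Prop :=
  forall S : {set 'I_N},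
    arith_rk X S = arith_rk Y S /\
    (forall k, is_arith_mult X S k <-> is_arith_mult Y S k).

Section BipartiteGraph.
Variables (d n : nat).

(* Vertices r_1..r_d (inl) and c_1..c_n (inr); an edge set E is a set of
   positions (i, j) of the matrix, the edge {r_i, c_j}. *)
Definition bip_adj (E : {set 'I_d * 'I_n}) : rel ('I_d + 'I_n) :=
  fun u v => match u, v with
             | inl i, inr j => (i, j) \in E
             | inr j, inl i => (i, j) \in E
             | _, _ => false
             end.

Definition GA_edges (A : 'M[int]_(d, n)) : {set 'I_d * 'I_n} :=
  [set p | A p.1 p.2 != 0].

Definition is_forest (E : {set 'I_d * 'I_n}) : Prop :=
  ~ exists c : seq ('I_d + 'I_n), (3 <= size c)%N /\ ucycle (bip_adj E) c.

(* P is a coordinatizing path of A: the entries of A corresponding to the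
   edges of a spanning forest of G_A (a subgraph of G_A on all vertices,
   without cycles, with the same connected components as G_A). *)
Definition coordinatizing_path (A : 'M[int]_(d, n)) (P : {set 'I_d * 'I_n})
  : Prop :=
  [/\ P \subset GA_edges A,
      is_forest P &
      forall u v, connect (bip_adj (GA_edges A)) u v = connect (bip_adj P) u v].

End BipartiteGraph.

(* The arithmetic matroid of X determines |det| of every maximal minor of X:
   the rank tells whether the minor is singular, and otherwise the multiplicity
   of its columns is the index of the lattice they span, which is |det| by the
   Smith normal form.  Replacing one column of the diagonal matrix B by a
   column of A shows that A, A' and A'' have the same entries up to sign.
   If A' <> A'', choose an entry (i, j) where they differ together with a
   shortest walk from c_j to r_i through entries where they agree; one exists
   because the coordinatizing path consists of such entries.  Minimality makes
   this walk, closed by the edge {r_i, c_j}, an induced cycle of G_A' of length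
   at least 4.  In the minor whose A-columns are the columns of this cycle only
   the identity and the cyclic rotation contribute to the determinant; the
   first term is the same for A' and A'', the second changes sign, so the two
   minors have different absolute values. *)

From HB Require Import structures.
From mathcomp Require Import all_boot all_order all_algebra all_fingroup.
From mathcomp Require Import Rstruct zify.
From Stdlib Require Import Classical ClassicalEpsilon.
Import Order.TTheory GRing.Theory Num.Theory.
Local Open Scope ring_scope.
Set Implicit Arguments. Unset Strict Implicit. Unset Printing Implicit Defensive.

Definition in_lattice d (M : 'M[int]_d) (v : 'cV[int]_d) : Prop :=
  exists z : 'cV[int]_d, v = M *m z.

Definition lattice_transversal d (M : 'M[int]_d) (reps : seq 'cV[int]_d) :=
  [/\ uniq reps,
      {in reps &, forall r1 r2, in_lattice M (r1 - r2) -> r1 = r2} &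
      forall v, exists2 r, r \in reps & in_lattice M (v - r)].

Lemma eq_residues_of_dvdz (a b : nat) (s y : int) :
  (a < absz s)%N -> (b < absz s)%N -> a%:Z - b%:Z = s * y -> a = b.
Proof.
move=> ltas ltbs eab; have [y0 | ny0] := eqVneq y 0.
  by move: eab; rewrite y0 mulr0; lia.
have : (absz s <= absz (s * y)%R)%N by rewrite abszM leq_pmulr ?absz_gt0.
by rewrite -eab; lia.
Qed.

Lemma diag_lattice_transversal d (s : 'I_d -> int) :
  (forall i, s i != 0) ->
  exists2 reps, size reps = (\prod_i absz (s i))%N &
    lattice_transversal (diag_mx (\row_i s i)) reps.
Proof.
move=> s_nz; pose m i := absz (s i).
pose w (f : {dffun forall i, 'I_(m i)}) : 'cV[int]_d := \col_i (f i : nat)%:Z.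
have w_inj : injective w.
  move=> f f' /matrixP wff'; apply/ffunP => i; apply: val_inj.
  by have := wff' i ord0; rewrite !mxE => -[].
exists (map w (enum {dffun forall i, 'I_(m i)})).
  rewrite size_map -cardE card_dep_ffun foldrE big_map big_enum /=.
  by apply: eq_bigr => i _; rewrite card_ord.
split; first by rewrite map_inj_uniq ?enum_uniq.
- move=> _ _ /mapP[f _ ->] /mapP[f' _ ->] [z /matrixP ez]; congr w.
  apply/ffunP => i; apply: val_inj; apply: (@eq_residues_of_dvdz _ _ (s i) (z i ord0)).
  + exact: ltn_ord.
  + exact: ltn_ord.
  + by have := ez i ord0; rewrite mul_diag_mx !mxE.
- move=> v.
  have lt_mod i : (absz (v i ord0 %% s i)%Z < m i)%N.
    have := modz_ge0 (v i ord0) (s_nz i); have := ltz_mod (v i ord0) (s_nz i).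
    by rewrite /m; lia.
  pose f : {dffun forall i, 'I_(m i)} := [ffun i => Ordinal (lt_mod i)].
  exists (w f); first by rewrite map_f ?mem_enum.
  exists (\col_i (v i ord0 %/ s i)%Z); apply/matrixP => i k.
  rewrite (ord1 k) mul_diag_mx !mxE ffunE /= gez0_abs ?modz_ge0 //.
  by rewrite {1}(divz_eq (v i ord0) (s i)) addrK mulrC.
Qed.

Lemma in_lattice_unimodular d (L D R : 'M[int]_d) v :
  L \in unitmx -> R \in unitmx ->
  in_lattice (L *m D *m R) v <-> in_lattice D (invmx L *m v).
Proof.
move=> uL uR; split=> [[z ->] | [y ey]].
  by exists (R *m z); rewrite -!mulmxA mulKmx.
exists (invmx R *m y); rewrite -!mulmxA mulKVmx // -ey.
by rewrite mulmxA mulmxV ?mul1mx.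
Qed.

Lemma unimodular_lattice_transversal d (L D R : 'M[int]_d) reps :
  L \in unitmx -> R \in unitmx -> lattice_transversal D reps ->
  lattice_transversal (L *m D *m R) (map (mulmx L) reps).
Proof.
move=> uL uR [reps_uniq reps_irr reps_cover].
have mulL_inj : injective (@mulmx _ _ _ 1 L) by move=> u v; apply: (can_inj (mulKmx uL)).
split; first by rewrite (map_inj_uniq mulL_inj).
- move=> _ _ /mapP[r1 r1_in ->] /mapP[r2 r2_in ->].
  by rewrite in_lattice_unimodular // -mulmxBr mulKmx // => /reps_irr ->.
- move=> v; have [r r_in Dr] := reps_cover (invmx L *m v).
  exists (L *m r); first exact: map_f.
  by rewrite in_lattice_unimodular // mulmxBr mulKmx.
Qed.

Lemma absz_det_unitmx d (M : 'M[int]_d) : M \in unitmx -> absz (\det M) = 1%N.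
Proof. by rewrite unitmxE unfold_in => /orP[] /eqP ->. Qed.

Lemma lattice_index d (M : 'M[int]_d) : \det M != 0 ->
  exists2 reps, size reps = absz (\det M) & lattice_transversal M reps.
Proof.
move=> detM_nz; have [L uL [R uR [s _ eM]]] := int_Smith_normal_form M.
have eD : \matrix_(i, j) (s`_i *+ (i == j :> nat)) = diag_mx (\row_i s`_i) :> 'M_d.
  by apply/matrixP => i j; rewrite !mxE.
rewrite eD in eM.
have detM : \det M = \det L * \prod_(i < d) s`_i * \det R.
  by rewrite eM !det_mulmx det_diag; congr (_ * _ * _); apply: eq_bigr => i _; rewrite mxE.
have s_nz (i : 'I_d) : s`_i != 0.
  by apply: contraNneq detM_nz => si0; rewrite detM (bigD1 i) //= si0 mul0r mulr0 mul0r.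
have [reps size_reps tr_reps] := diag_lattice_transversal s_nz.
exists (map (mulmx L) reps); last by rewrite eM; apply: unimodular_lattice_transversal.
rewrite size_map size_reps detM !abszM !absz_det_unitmx // mul1n muln1.
by rewrite (big_morph absz abszM (id1 := 1) (id2 := 1%N)).
Qed.

Lemma irredundant_size_le (T : eqType) (x0 : T) (R : T -> T -> Prop) (r1 r2 : seq T) :
  (forall a b c, R a c -> R b c -> R a b) ->
  (forall i j, (i < size r1)%N -> (j < size r1)%N ->
     R (nth x0 r1 i) (nth x0 r1 j) -> i = j) ->
  (forall x, x \in r1 -> exists2 y, y \in r2 & R x y) ->
  (size r1 <= size r2)%N.
Proof.
move=> R_trans r1_irr r1_to_r2.
have pick_image (i : 'I_(size r1)) : {j : 'I_(size r2) | R (nth x0 r1 i) (nth x0 r2 j)}.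
  apply: constructive_indefinite_description.
  have [y y_in Ry] := r1_to_r2 _ (mem_nth x0 (ltn_ord i)).
  by rewrite -index_mem in y_in; exists (Ordinal y_in); rewrite /= nth_index // -index_mem.
have pick_inj : injective (fun i => proj1_sig (pick_image i)).
  move=> i i' eii'; apply: val_inj; apply: r1_irr; try exact: ltn_ord.
  case: (pick_image i) eii' => j Rij; case: (pick_image i') => j' Rij' /= ejj'.
  by rewrite ejj' in Rij; exact: R_trans Rij Rij'.
by have := leq_card _ pick_inj; rewrite !card_ord.
Qed.

Lemma in_subgroupB d N (X : 'M[int]_(d, N)) S u v :
  in_subgroup X S u -> in_subgroup X S v -> in_subgroup X S (u - v).
Proof.
move=> [c ->] [c' ->]; exists (fun e => c e - c' e).
by rewrite -sumrB; apply: eq_bigr => e _; rewrite scalerBl.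
Qed.

Lemma is_arith_mult_le d N (X : 'M[int]_(d, N)) S k1 k2 :
  is_arith_mult X S k1 -> is_arith_mult X S k2 -> (k1 <= k2)%N.
Proof.
move=> [r1 [<- r1_span r1_irr _]] [r2 [<- _ _ r2_cover]].
apply: (irredundant_size_le (x0 := 0) (R := fun a b => in_subgroup X S (a - b))) => //.
- move=> a b c ac bc; have := in_subgroupB ac bc.
  by rewrite opprB addrA subrK.
- by move=> x /r1_span /r2_cover.
Qed.

Lemma is_arith_mult_unique d N (X : 'M[int]_(d, N)) S k1 k2 :
  is_arith_mult X S k1 -> is_arith_mult X S k2 -> k1 = k2.
Proof.
by move=> m1 m2; apply/eqP; rewrite eqn_leq (is_arith_mult_le m1 m2) (is_arith_mult_le m2 m1).
Qed.

Lemma mxR_unit d (M : 'M[int]_d) : (mxR M \in unitmx) = (\det M != 0).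
Proof. by rewrite unitmxE /mxR det_map_mx unitfE intr_eq0. Qed.

Section ImageBasis.
Variables (d N : nat) (g : 'I_d -> 'I_N).
Hypothesis g_inj : injective g.

Lemma sum_image_scale_col (R : comPzRingType) (Y : 'M[R]_(d, N)) (c : 'I_N -> R) :
  \sum_(e in g @: setT) c e *: col e Y = colsub g Y *m \col_j c (g j).
Proof.
rewrite big_imset /=; last by move=> ? ? _ _ /g_inj.
apply/matrixP => i k; rewrite summxE !mxE.
by apply: eq_big => [j | j _]; rewrite ?in_setT // !mxE mulrC.
Qed.

Lemma exists_on_image (R : nmodType) (w : 'I_d -> R) :
  exists c : 'I_N -> R, forall j, c (g j) = w j.
Proof.
exists (fun e => if [pick j | g j == e] is Some j then w j else 0) => j.
by case: pickP => [j' /eqP /g_inj -> // | /(_ j)]; rewrite eqxx.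
Qed.

Variable X : 'M[int]_(d, N).

Lemma in_subgroup_imageE v :
  in_subgroup X (g @: setT) v <-> in_lattice (colsub g X) v.
Proof.
rewrite /in_subgroup /xcol; split=> [[c ->] | [z ->]].
  by exists (\col_j c (g j)); rewrite sum_image_scale_col.
have [c cE] := exists_on_image (fun j => z j ord0).
exists c; rewrite sum_image_scale_col; congr (_ *m _).
by apply/matrixP => j k; rewrite (ord1 k) !mxE cE.
Qed.

Lemma in_real_span_image v :
  \det (colsub g X) != 0 -> in_real_span X (g @: setT) v.
Proof.
rewrite -mxR_unit => uX.
have mxR_colsub : mxR (colsub g X) = colsub g (mxR X) by rewrite /mxR map_mxsub.
have [c cE] := exists_on_image (fun j => (invmx (mxR (colsub g X)) *m mxR v) j ord0).
exists c; rewrite (eq_bigr (fun e => c e *: col e (mxR X))); last first.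
  by move=> e _; rewrite /mxR /xcol map_col.
rewrite sum_image_scale_col -mxR_colsub.
suff -> : \col_j c (g j) = invmx (mxR (colsub g X)) *m mxR v by rewrite mulKVmx.
by apply/matrixP => j k; rewrite (ord1 k) mxE cE.
Qed.

Lemma arith_rk_image : arith_rk X (g @: setT) = \rank (mxR (colsub g X)).
Proof.
rewrite /arith_rk; set Z := \matrix_(e < N, i < d) _.
pose Sel : 'M[realR]_(N, d) := \matrix_(e, j) (e == g j)%:R.
have eZ : Z = Sel *m (mxR (colsub g X))^T.
  apply/matrixP => e i; rewrite !mxE.
  case: ifP => [/imsetP[j _ ->] | e_out].
    rewrite (bigD1 j) //= big1 ?addr0 => [|j' nj]; rewrite !mxE ?eqxx ?mul1r //.
    by rewrite (inj_eq g_inj) eq_sym (negbTE nj) mul0r.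
  rewrite big1 // => j _; rewrite !mxE; case: eqP => [ej|]; last by rewrite mul0r.
  by move: e_out; rewrite ej imset_f.
have eXg : (mxR (colsub g X))^T = Sel^T *m Z.
  apply/matrixP => j i; rewrite !mxE (bigD1 (g j)) //= big1 ?addr0 => [|e ne]; rewrite !mxE.
    by rewrite eqxx imset_f // mul1r.
  by rewrite (negbTE ne) mul0r.
apply/eqP; rewrite eqn_leq; apply/andP; split.
  by rewrite eZ; apply: leq_trans (mxrankM_maxr _ _) _; rewrite mxrank_tr.
by rewrite -mxrank_tr eXg mxrankM_maxr.
Qed.

Lemma is_arith_mult_image :
  \det (colsub g X) != 0 -> is_arith_mult X (g @: setT) (absz (\det (colsub g X))).
Proof.
move=> detX_nz.
have [reps size_reps [reps_uniq reps_irr reps_cover]] := lattice_index detX_nz.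
exists reps; split=> //.
- by move=> r _; apply: in_real_span_image.
- move=> i j; rewrite -size_reps => lti ltj /in_subgroup_imageE.
  by move/reps_irr; rewrite !mem_nth // => /(_ isT isT) /eqP; rewrite nth_uniq // => /eqP.
- by move=> v _; have [r r_in /in_subgroup_imageE] := reps_cover v; exists r.
Qed.

End ImageBasis.

Lemma same_arith_matroid_absz_det d N (X Y : 'M[int]_(d, N)) g :
  same_arith_matroid X Y -> injective g ->
  absz (\det (colsub g X)) = absz (\det (colsub g Y)).
Proof.
move=> XY g_inj; have [rkXY multXY] := XY (g @: setT).
rewrite !arith_rk_image // in rkXY.
have nz_iff : (\det (colsub g X) != 0) = (\det (colsub g Y) != 0).
  by rewrite -!mxR_unit -!row_free_unit /row_free rkXY.
have [detX0 | detX_nz] := eqVneq (\det (colsub g X)) 0.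
  by move: nz_iff; rewrite detX0 eqxx => /esym /negbFE /eqP ->.
have detY_nz : \det (colsub g Y) != 0 by rewrite -nz_iff.
apply: (is_arith_mult_unique (X := Y) (S := g @: setT)).
  by apply/multXY/is_arith_mult_image.
exact: is_arith_mult_image.
Qed.

Lemma det_supported n (R : comPzRingType) (M : 'M[R]_n) (S : {set 'S_n}) :
  (forall s, s \notin S -> \prod_i M (s i) i = 0) ->
  \det M = \sum_(s in S) (-1) ^+ s * \prod_i M (s i) i.
Proof.
move=> vanish; rewrite -det_tr /determinant (bigID (mem S)) /= [X in _ + X]big1 ?addr0.
  by apply: eq_bigr => s _; congr (_ * _); apply: eq_bigr => i _; rewrite mxE.
move=> s /vanish prod0; rewrite -[RHS](mulr0 ((-1) ^+ s)) -prod0.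
by congr (_ * _); apply: eq_bigr => i _; rewrite mxE.
Qed.

Lemma diag_full_rank_nz d (B : 'M[int]_d) :
  (forall i j, i != j -> B i j = 0) -> \rank (mxR B) = d -> forall i, B i i != 0.
Proof.
move=> B_diag rkB i.
have eB : B = diag_mx (\row_i B i i).
  apply/matrixP => i' j; rewrite !mxE; have [-> | ne] := eqVneq i' j; first by rewrite mulr1n.
  by rewrite mulr0n B_diag.
have : \det B != 0 by rewrite -mxR_unit -row_free_unit /row_free rkB.
by rewrite {1}eB det_diag => /prodf_neq0 /(_ i isT); rewrite mxE.
Qed.

Section MixedColumns.
Variables (d n : nat) (B : 'M[int]_d).
Hypothesis B_diag : forall i j, i != j -> B i j = 0.
Hypothesis B_nz : forall i, B i i != 0.

Definition mixed_cols (c : 'I_d -> option 'I_n) (t : 'I_d) : 'I_(d + n) :=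
  if c t is Some j then rshift d j else lshift n t.

Lemma mixed_cols_inj c :
  (forall t t' j, c t = Some j -> c t' = Some j -> t = t') -> injective (mixed_cols c).
Proof.
move=> c_inj t t'; rewrite /mixed_cols.
case ct: (c t) => [j|]; case ct': (c t') => [j'|].
- by move/rshift_inj => ejj'; rewrite ejj' in ct; apply: c_inj ct ct'.
- by move/(congr1 val) => /=; have := ltn_ord t'; lia.
- by move/(congr1 val) => /=; have := ltn_ord t; lia.
- exact: lshift_inj.
Qed.

Lemma mixed_colsE (A : 'M[int]_(d, n)) c i t :
  colsub (mixed_cols c) (row_mx B A) i t = if c t is Some j then A i j else B i t.
Proof. by rewrite mxE /mixed_cols; case: (c t) => [j|]; rewrite ?row_mxEr ?row_mxEl. Qed.

Lemma mixed_cols_perm_fix (A : 'M[int]_(d, n)) c (s : 'S_d) t :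
  (forall t, colsub (mixed_cols c) (row_mx B A) (s t) t != 0) -> c t = None -> s t = t.
Proof.
move=> s_nz ct; apply/eqP; apply: contraR (s_nz t) => st_ne.
by rewrite mixed_colsE ct B_diag.
Qed.

Definition replace_col (i : 'I_d) (j : 'I_n) (t : 'I_d) : option 'I_n :=
  if t == i then Some j else None.

Lemma det_replace_col (A : 'M[int]_(d, n)) i j :
  \det (colsub (mixed_cols (replace_col i j)) (row_mx B A)) =
  A i j * \prod_(t | t != i) B t t.
Proof.
rewrite (@det_supported _ _ _ [set 1%g]) ?big_set1 ?odd_perm1 ?mul1r => [|s].
  rewrite (bigD1 i) //= perm1 mixed_colsE /replace_col eqxx; congr (_ * _).
  by apply: eq_bigr => t /negbTE t_ne; rewrite perm1 mixed_colsE /replace_col t_ne.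
rewrite in_set1 => s_ne1; apply/eqP; apply: contraNT s_ne1 => /prodf_neq0 s_nz.
have fix_off t : t != i -> s t = t.
  move=> /negbTE t_ne; apply: (mixed_cols_perm_fix (fun t => s_nz t isT)).
  by rewrite /replace_col t_ne.
have fix_i : s i = i.
  apply/eqP; apply: contraT => si_ne; have := fix_off _ si_ne.
  by move/perm_inj => esi; rewrite esi eqxx in si_ne.
apply/eqP/permP => t; rewrite perm1.
by have [-> | /fix_off] := eqVneq t i.
Qed.

Lemma same_arith_matroid_absz_entry (A A' : 'M[int]_(d, n)) i j :
  same_arith_matroid (row_mx B A) (row_mx B A') -> absz (A' i j) = absz (A i j).
Proof.
move=> AA'; have replace_inj : injective (mixed_cols (replace_col i j)).
  by apply: mixed_cols_inj => t t' j'; rewrite /replace_col; do 2 case: eqP => // ->.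
have := same_arith_matroid_absz_det AA' replace_inj.
rewrite !det_replace_col !abszM => /eqP; rewrite eqn_pmul2r ?absz_gt0 => [/eqP -> //|].
by apply/prodf_neq0 => t _.
Qed.

End MixedColumns.

Definition cyc_pred (k t : nat) : nat := if t is t'.+1 then t' else k.-1.

Lemma cyc_pred_lt k t : (t < k)%N -> (cyc_pred k t < k)%N.
Proof. by case: t => /= [|t]; lia. Qed.

Lemma fix_or_cyc_pred k (u : nat -> nat) :
  (forall s t, (s < k)%N -> (t < k)%N -> u s = u t -> s = t) ->
  (forall t, (t < k)%N -> u t = t \/ u t = cyc_pred k t) ->
  (forall t, (t < k)%N -> u t = t) \/ (forall t, (t < k)%N -> u t = cyc_pred k t).
Proof.
move=> u_inj u_step.
have fix_succ t : (t.+1 < k)%N -> u t = t -> u t.+1 = t.+1.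
  move=> ltk ut; case: (u_step _ ltk) => //= ut1.
  by have := u_inj t t.+1 (ltnW ltk) ltk; rewrite ut ut1 => /(_ erefl); lia.
have fix_up t t' : (t <= t' < k)%N -> u t = t -> u t' = t'.
  elim: t' => [|t' IH] /andP[le ltk] ut; first by move: le ut; rewrite leqn0 => /eqP ->.
  have [<- // | ne] := eqVneq t t'.+1.
  by apply: fix_succ => //; apply: IH; lia.
have [-> | k_pos] := posnP k; first by left.
have [u0 | u0] := u_step 0%N k_pos; [left | right] => t ltk.
  by apply: (fix_up 0%N); lia.
case: (u_step t ltk) => // ut.
have ukm : u k.-1 = k.-1 by apply: (fix_up t); lia.
have k1 : k.-1 = 0%N by apply: u_inj; rewrite ?ukm ?u0 //; lia.
have t0 : t = 0%N by lia.
by rewrite ut t0 /= k1.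
Qed.

Lemma absz_addr_subr_neq (a b : int) : a != 0 -> b != 0 -> absz (a + b) != absz (a - b).
Proof. by move=> a_nz b_nz; apply/eqP => eab; nia. Qed.

Section AlternatingCycle.
Variables (d n k : nat) (B : 'M[int]_d) (rs : nat -> 'I_d) (cs : nat -> 'I_n).
Hypothesis B_diag : forall i j, i != j -> B i j = 0.
Hypothesis B_nz : forall i, B i i != 0.
Hypothesis k_gt1 : (1 < k)%N.
Hypothesis rs_inj : forall s t, (s < k)%N -> (t < k)%N -> rs s = rs t -> s = t.
Hypothesis cs_inj : forall s t, (s < k)%N -> (t < k)%N -> cs s = cs t -> s = t.

Definition cycle_rows : seq 'I_d := mkseq rs k.

Lemma rs_in_cycle_rows t : (t < k)%N -> rs t \in cycle_rows.
Proof. by move=> ltk; apply/mapP; exists t; rewrite ?mem_iota. Qed.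

Lemma index_rs t : (t < k)%N -> index (rs t) cycle_rows = t.
Proof.
move=> ltk; rewrite -(nth_mkseq (rs 0%N) rs ltk) index_uniq ?size_mkseq //.
by apply/mkseq_uniqP => s t' ltsk lttk; apply: rs_inj.
Qed.

Lemma cycle_rowsP j : reflect (exists2 t, (t < k)%N & j = rs t) (j \in cycle_rows).
Proof.
apply: (iffP mapP) => [[t] | [t ltk ->]]; last by exists t; rewrite ?mem_iota.
by rewrite mem_iota => ltk ->; exists t.
Qed.

Definition cycle_cols (j : 'I_d) : option 'I_n :=
  if j \in cycle_rows then Some (cs (index j cycle_rows)) else None.

(* Column rs t of this minor is column cs t of A; when the support of A on these
   rows and columns is the cycle rs t -- cs t -- rs (t - 1) (indices mod k), the
   only permutations with nonvanishing product are 1 and cycle_rot. *)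
Definition cycle_minor (A : 'M[int]_(d, n)) := colsub (mixed_cols cycle_cols) (row_mx B A).

Lemma cycle_cols_inj : injective (mixed_cols cycle_cols).
Proof.
apply: mixed_cols_inj => j j' c; rewrite /cycle_cols.
case: (cycle_rowsP j) => [[t ltk ->] | _] //; case: (cycle_rowsP j') => [[t' ltk' ->] | _] //.
by rewrite !index_rs // => -[<-] -[/(cs_inj ltk' ltk) ->].
Qed.

Lemma cycle_minor_rs A i t : (t < k)%N -> cycle_minor A i (rs t) = A i (cs t).
Proof. by move=> ltk; rewrite mixed_colsE /cycle_cols rs_in_cycle_rows ?index_rs. Qed.

Lemma cycle_minor_out A i j : j \notin cycle_rows -> cycle_minor A i j = B i j.
Proof. by move=> out; rewrite mixed_colsE /cycle_cols (negbTE out). Qed.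

Definition cycle_rot_fun (j : 'I_d) : 'I_d :=
  if j \in cycle_rows then rs (cyc_pred k (index j cycle_rows)) else j.

Lemma cycle_rot_fun_inj : injective cycle_rot_fun.
Proof.
move=> j j'; rewrite /cycle_rot_fun.
case: (cycle_rowsP j) => [[t ltk ->] | out]; case: (cycle_rowsP j') => [[t' ltk' ->] | out'] //.
- rewrite !index_rs // => /rs_inj; rewrite !cyc_pred_lt // => /(_ isT isT) e.
  by congr rs; move: e; case: t ltk => [|t]; case: t' ltk' => [|t'] /=; lia.
- by rewrite index_rs // => e; case: out'; exists (cyc_pred k t); rewrite ?cyc_pred_lt ?e.
- by rewrite index_rs // => e; case: out; exists (cyc_pred k t'); rewrite ?cyc_pred_lt.
Qed.

Definition cycle_rot : 'S_d := perm cycle_rot_fun_inj.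

Lemma cycle_rot_rs t : (t < k)%N -> cycle_rot (rs t) = rs (cyc_pred k t).
Proof. by move=> ltk; rewrite permE /cycle_rot_fun rs_in_cycle_rows ?index_rs. Qed.

Lemma cycle_rot_out j : j \notin cycle_rows -> cycle_rot j = j.
Proof. by move=> out; rewrite permE /cycle_rot_fun (negbTE out). Qed.

Lemma cycle_rot_neq1 : cycle_rot != 1%g.
Proof.
apply/eqP => /permP /(_ (rs 0%N)); rewrite cycle_rot_rs ?perm1 /=; last lia.
by move/rs_inj; lia.
Qed.

Section CycleSupport.
Variable A : 'M[int]_(d, n).
Hypothesis A_support : forall s t, (s < k)%N -> (t < k)%N ->
  A (rs s) (cs t) != 0 -> s = t \/ s = cyc_pred k t.

Lemma cycle_minor_perm (s : 'S_d) :
  (forall j, cycle_minor A (s j) j != 0) -> s = 1%g \/ s = cycle_rot.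
Proof.
move=> s_nz.
have s_out j : j \notin cycle_rows -> s j = j.
  by move=> out; apply: (mixed_cols_perm_fix B_diag s_nz); rewrite /cycle_cols (negbTE out).
have s_rows t : (t < k)%N -> s (rs t) \in cycle_rows.
  move=> ltk; apply: contraT => out; have /perm_inj srs := s_out _ out.
  by rewrite srs rs_in_cycle_rows in out.
pose u t := index (s (rs t)) cycle_rows.
have u_lt t : (t < k)%N -> (u t < k)%N.
  by move=> ltk; rewrite -(size_mkseq rs k) index_mem s_rows.
have s_rsE t : (t < k)%N -> s (rs t) = rs (u t).
  by move=> ltk; rewrite /u; case/cycle_rowsP: (s_rows t ltk) => t' ltk' ->; rewrite index_rs.
have u_inj s1 s2 : (s1 < k)%N -> (s2 < k)%N -> u s1 = u s2 -> s1 = s2.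
  move=> lt1 lt2 eu; apply: rs_inj => //; apply: (@perm_inj _ s).
  by rewrite !s_rsE // eu.
have u_step t : (t < k)%N -> u t = t \/ u t = cyc_pred k t.
  by move=> ltk; apply: A_support; rewrite ?u_lt // -cycle_minor_rs // -s_rsE.
have [u_fix | u_rot] := fix_or_cyc_pred u_inj u_step; [left | right];
  apply/permP => j; case: (boolP (j \in cycle_rows)) => [/cycle_rowsP[t ltk ->] | out].
- by rewrite perm1 s_rsE // u_fix.
- by rewrite perm1 s_out.
- by rewrite cycle_rot_rs // s_rsE // u_rot.
- by rewrite cycle_rot_out // s_out.
Qed.

Lemma det_cycle_minor : \det (cycle_minor A) =
  \prod_j cycle_minor A j j + (-1) ^+ cycle_rot * \prod_j cycle_minor A (cycle_rot j) j.
Proof.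
rewrite (@det_supported _ _ _ [set 1%g; cycle_rot]) => [|s].
  rewrite big_setU1 ?inE 1?eq_sym ?cycle_rot_neq1 //= big_set1 odd_perm1 mul1r.
  by congr (_ + _); apply: eq_bigr => j _; rewrite perm1.
rewrite !inE negb_or => /andP[ne1 ne_rot]; apply/eqP; apply: contraT => /prodf_neq0 s_nz.
by case: (cycle_minor_perm (fun j => s_nz j isT)) => es; rewrite es eqxx in ne1 ne_rot.
Qed.

End CycleSupport.

Lemma cycle_minor_absz_neq (A1 A2 : 'M[int]_(d, n)) :
  (forall s t, (s < k)%N -> (t < k)%N -> A1 (rs s) (cs t) != 0 -> s = t \/ s = cyc_pred k t) ->
  (forall s t, (s < k)%N -> (t < k)%N -> A2 (rs s) (cs t) != 0 -> s = t \/ s = cyc_pred k t) ->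
  (forall t, (t < k)%N -> A1 (rs t) (cs t) != 0 /\ A1 (rs (cyc_pred k t)) (cs t) != 0) ->
  (forall t, (t < k)%N -> A2 (rs t) (cs t) = A1 (rs t) (cs t)) ->
  (forall t, (t.+1 < k)%N -> A2 (rs t) (cs t.+1) = A1 (rs t) (cs t.+1)) ->
  A2 (rs k.-1) (cs 0%N) = - A1 (rs k.-1) (cs 0%N) ->
  absz (\det (cycle_minor A1)) != absz (\det (cycle_minor A2)).
Proof.
move=> A1_support A2_support A1_nz agree_diag agree_pred flip.
rewrite !det_cycle_minor //.
have diagE : \prod_j cycle_minor A2 j j = \prod_j cycle_minor A1 j j.
  apply: eq_bigr => j _; case: (boolP (j \in cycle_rows)) => [/cycle_rowsP[t ltk ->] | out].
    by rewrite !cycle_minor_rs // agree_diag.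
  by rewrite !cycle_minor_out.
have rotE : \prod_j cycle_minor A2 (cycle_rot j) j = - \prod_j cycle_minor A1 (cycle_rot j) j.
  have rs0_in : rs 0%N \in cycle_rows by rewrite rs_in_cycle_rows; lia.
  rewrite (bigD1 (rs 0%N)) // [in RHS](bigD1 (rs 0%N)) //= !cycle_rot_rs; last lia.
  rewrite !cycle_minor_rs /=; try lia.
  rewrite flip mulNr; congr (- (_ * _)); apply: eq_bigr => j.
  case: (boolP (j \in cycle_rows)) => [/cycle_rowsP[[|t] ltk ->] | out]; first by rewrite eqxx.
    by rewrite !cycle_rot_rs // !cycle_minor_rs ?agree_pred //; lia.
  by rewrite !cycle_rot_out // !cycle_minor_out.
have diag_nz : \prod_j cycle_minor A1 j j != 0.
  apply/prodf_neq0 => j _; case: (boolP (j \in cycle_rows)) => [/cycle_rowsP[t ltk ->] | out].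
    by rewrite cycle_minor_rs //; case: (A1_nz t ltk).
  by rewrite cycle_minor_out.
have rot_nz : \prod_j cycle_minor A1 (cycle_rot j) j != 0.
  apply/prodf_neq0 => j _; case: (boolP (j \in cycle_rows)) => [/cycle_rowsP[t ltk ->] | out].
    by rewrite cycle_rot_rs // cycle_minor_rs ?cyc_pred_lt //; case: (A1_nz t ltk).
  by rewrite cycle_rot_out // cycle_minor_out.
rewrite diagE rotE mulrN absz_addr_subr_neq //.
by rewrite mulf_neq0 ?signr_eq0.
Qed.

End AlternatingCycle.

Lemma ex_minimal (P : nat -> Prop) :
  (exists n, P n) -> exists n, P n /\ forall m, P m -> (n <= m)%N.
Proof.
move=> [n]; elim/ltn_ind: n => n IH Pn.
have [[m Pm ltmn] | no_less] := classic (exists2 m, P m & (m < n)%N); first exact: IH Pm.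
by exists n; split=> // m Pm; rewrite leqNgt; apply/negP => ltmn; apply: no_less; exists m.
Qed.

Section Walks.
Variables (T : Type) (e : T -> T -> bool).
Local Open Scope nat_scope.

Definition walk (x y : T) (L : nat) :=
  exists f : nat -> T, [/\ f 0 = x, f L = y & forall t, t < L -> e (f t) (f t.+1)].

Lemma walk_rev x y L : (forall u v, e u v -> e v u) -> walk x y L -> walk y x L.
Proof.
move=> e_sym [f [f0 fL f_walk]]; exists (fun t => f (L - t)); split.
- by rewrite subn0.
- by rewrite subnn.
- move=> t ltL; apply: e_sym; have -> : L - t = (L - t.+1).+1 by lia.
  by apply: f_walk; lia.
Qed.

Section WalkAlong.
Variables (f : nat -> T) (L : nat).
Hypothesis f_walk : forall t, t < L -> e (f t) (f t.+1).

Lemma walk_subwalk a b : a <= b <= L -> walk (f a) (f b) (b - a).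
Proof.
move=> /andP[leab lebL]; exists (fun t => f (a + t)); split.
- by rewrite addn0.
- by congr f; lia.
- by move=> t ltba; rewrite addnS; apply: f_walk; lia.
Qed.

Hypothesis f_shortest : forall m, walk (f 0) (f L) m -> L <= m.

Lemma shortest_walk_inj s t : s <= L -> t <= L -> f s = f t -> s = t.
Proof.
wlog ltst : s t / s < t.
  by move=> IH leL leL' fst; case: (ltngtP s t) => // lt; [apply: IH | apply/esym/IH].
move=> _ leL fst; suff /f_shortest : walk (f 0) (f L) (L - (t - s)) by lia.
exists (fun u => if u <= s then f u else f (u + (t - s))); split=> //.
  case: ifP => leLs; last by congr f; lia.
  have -> : L - (t - s) = s by lia.
  by rewrite fst; congr f; lia.
move=> u; case: (ltngtP u s) => [ltus | ltsu | ->] ltL.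
- by apply: f_walk; lia.
- by rewrite addSn; apply: f_walk; lia.
- by rewrite fst addSn subnKC ?(ltnW ltst) //; apply: f_walk; lia.
Qed.

Lemma shortest_walk_chordless a b : a.+1 < b <= L -> ~~ e (f a) (f b).
Proof.
move=> /andP[ltab lebL]; apply/negP => e_ab.
suff /f_shortest : walk (f 0) (f L) (L - (b - a)).+1 by lia.
exists (fun t => if t <= a then f t else f (t + (b - a)).-1); split=> //.
  by case: ifP => leLa; [lia | congr f; lia].
move=> t; case: (ltngtP t a) => [ltta | ltat | ->] ltL.
- by apply: f_walk; lia.
- have -> : (t.+1 + (b - a)).-1 = (t + (b - a)).-1.+1 by lia.
  by apply: f_walk; lia.
- by have -> : (a.+1 + (b - a)).-1 = b by lia.
Qed.

End WalkAlong.

End Walks.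

Lemma connect_walk (T : finType) (e : rel T) x y : connect e x y -> exists L, walk e x y L.
Proof.
move/connectP => [p p_path ->]; exists (size p), (fun t => nth x (x :: p) t); split=> //.
  by rewrite (last_nth x).
by move=> t ltp; move/(pathP x): p_path => /(_ t ltp).
Qed.

Section BipartiteAdjacency.
Variables (d n : nat).
Implicit Types (E F : {set 'I_d * 'I_n}) (u v : 'I_d + 'I_n).

Definition col_vertex v : bool := if v is inr _ then true else false.

Lemma bip_adj_sym E u v : bip_adj E u v -> bip_adj E v u.
Proof. by case: u; case: v. Qed.

Lemma bip_adj_subset E F : E \subset F -> subrel (bip_adj E) (bip_adj F).
Proof. by move=> /subsetP EF [i|j] [i'|j'] //= /EF. Qed.

Lemma bip_adj_col_vertex E u v : bip_adj E u v -> col_vertex v = ~~ col_vertex u.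
Proof. by case: u; case: v. Qed.

Lemma bip_adjP E u v : bip_adj E u v ->
  exists i j, (i, j) \in E /\ (u = inl i /\ v = inr j \/ u = inr j /\ v = inl i).
Proof.
case: u => [i|j]; case: v => [i'|j'] //= uv; first by exists i, j'; split=> //; left.
by exists i', j; split=> //; right.
Qed.

End BipartiteAdjacency.

Section Disagreement.
Variables (d n : nat) (B : 'M[int]_d) (A1 A2 : 'M[int]_(d, n)).
Hypothesis B_diag : forall i j, i != j -> B i j = 0.
Hypothesis B_nz : forall i, B i i != 0.
Hypothesis absA : forall i j, absz (A2 i j) = absz (A1 i j).

Definition agree_edges : {set 'I_d * 'I_n} :=
  [set p | (A1 p.1 p.2 != 0) && (A1 p.1 p.2 == A2 p.1 p.2)].

Lemma disagree_nz i j : A1 i j != A2 i j -> A1 i j != 0.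
Proof. by move: (absA i j); lia. Qed.

Lemma disagree_opp i j : A1 i j != A2 i j -> A2 i j = - A1 i j.
Proof. by move: (absA i j); lia. Qed.

Lemma support_A2 i j : (A2 i j != 0) = (A1 i j != 0).
Proof. by rewrite -!absz_eq0 absA. Qed.

Definition disagreement_walk (L : nat) : Prop :=
  exists i j, A1 i j != A2 i j /\ walk (bip_adj agree_edges) (inr j) (inl i) L.

Section ShortestDisagreementWalk.
Variables (i0 : 'I_d) (j0 : 'I_n) (f : nat -> 'I_d + 'I_n) (L : nat).
Hypothesis disagree0 : A1 i0 j0 != A2 i0 j0.
Hypothesis f0 : f 0%N = inr j0.
Hypothesis fL : f L = inl i0.
Hypothesis f_walk : forall t, (t < L)%N -> bip_adj agree_edges (f t) (f t.+1).
Hypothesis f_min : forall m, disagreement_walk m -> (L <= m)%N.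
Local Open Scope nat_scope.

Let f_shortest m : walk (bip_adj agree_edges) (f 0) (f L) m -> L <= m.
Proof. by rewrite f0 fL => fm; apply: f_min; exists i0, j0. Qed.

Lemma shortest_walk_support a b : a < b <= L ->
  bip_adj (GA_edges A1) (f a) (f b) -> b = a.+1 \/ a = 0 /\ b = L.
Proof.
move=> /andP[ltab lebL] /bip_adjP[i [j [ij_in fab]]]; rewrite inE /= in ij_in.
have [agree_ij | disagree_ij] := eqVneq (A1 i j) (A2 i j).
  left; apply/eqP; apply: contraT => ne_b.
  have : bip_adj agree_edges (f a) (f b).
    by case: fab => -[-> ->] /=; rewrite inE /= ij_in agree_ij eqxx.
  by rewrite (negbTE (shortest_walk_chordless f_walk f_shortest _)) //; lia.
right; suff le_ba : L <= b - a by split; lia.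
apply: f_min; exists i, j; split=> //.
have sub : walk (bip_adj agree_edges) (f a) (f b) (b - a).
  by apply: (walk_subwalk f_walk); rewrite (ltnW ltab).
case: fab => -[fa fb]; rewrite fa fb in sub => //.
exact: walk_rev (@bip_adj_sym _ _ _) sub.
Qed.

Lemma shortest_walk_col_vertex t : t <= L -> col_vertex (f t) = ~~ odd t.
Proof.
elim: t => [|t IH] leL; first by rewrite f0.
by rewrite (bip_adj_col_vertex (f_walk leL)) IH 1?ltnW.
Qed.

Lemma shortest_walk_odd : odd L.
Proof. by have := shortest_walk_col_vertex (leqnn L); rewrite fL; case: (odd L). Qed.

Let m := L./2.

Lemma shortest_walk_length : L = m.*2.+1.
Proof. by rewrite -{1}(odd_double_half L) shortest_walk_odd. Qed.

Lemma shortest_walk_half_pos : 0 < m.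
Proof.
apply: contraTT disagree0; rewrite -eqn0Ngt => /eqP m0.
have L1 : L = 1 by rewrite shortest_walk_length m0.
have lt0L : 0 < L by rewrite L1.
have := f_walk lt0L; rewrite f0 -L1 fL /= inE /=.
by case/andP => _ ->.
Qed.

Definition walk_rows (t : nat) : 'I_d := if f t.*2.+1 is inl i then i else i0.
Definition walk_cols (t : nat) : 'I_n := if f t.*2 is inr j then j else j0.

Lemma walk_rowsE t : t <= m -> f t.*2.+1 = inl (walk_rows t).
Proof.
move=> le_tm; have := shortest_walk_col_vertex (_ : t.*2.+1 <= L).
rewrite shortest_walk_length ltnS leq_double /= odd_double /walk_rows => /(_ le_tm).
by case: (f _).
Qed.

Lemma walk_colsE t : t <= m -> f t.*2 = inr (walk_cols t).
Proof.
move=> le_tm; have := shortest_walk_col_vertex (_ : t.*2 <= L).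
rewrite shortest_walk_length leqW ?leq_double // odd_double /walk_cols => /(_ isT).
by case: (f _).
Qed.

Lemma walk_rows_inj s t : s < m.+1 -> t < m.+1 -> walk_rows s = walk_rows t -> s = t.
Proof.
move=> lts ltt e_st; have len := shortest_walk_length.
suff : s.*2.+1 = t.*2.+1 by lia.
by apply: (shortest_walk_inj f_walk f_shortest); [lia | lia | rewrite !walk_rowsE // e_st].
Qed.

Lemma walk_cols_inj s t : s < m.+1 -> t < m.+1 -> walk_cols s = walk_cols t -> s = t.
Proof.
move=> lts ltt e_st; have len := shortest_walk_length.
suff : s.*2 = t.*2 by lia.
by apply: (shortest_walk_inj f_walk f_shortest); [lia | lia | rewrite !walk_colsE // e_st].
Qed.

Lemma walk_cycle_support s t : s < m.+1 -> t < m.+1 ->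
  A1 (walk_rows s) (walk_cols t) != 0 -> s = t \/ s = cyc_pred m.+1 t.
Proof.
rewrite !ltnS => le_sm le_tm nz; have len := shortest_walk_length.
case: (leqP t s) => [le_ts | lt_st].
  have [|[t0 sL]] : s.*2.+1 = t.*2.+1 \/ t.*2 = 0 /\ s.*2.+1 = L.
  - apply: shortest_walk_support; first lia.
    by rewrite walk_colsE ?walk_rowsE //= inE.
  - by left; lia.
  right; have -> : t = 0 by lia.
  by rewrite /=; lia.
have [|[]] : t.*2 = s.*2.+2 \/ s.*2.+1 = 0 /\ t.*2 = L.
- apply: shortest_walk_support; first lia.
  by rewrite walk_colsE ?walk_rowsE //= inE.
- by right; have -> : t = s.+1 by [lia].
- by [].
Qed.

Lemma walk_rows_cols_agree t : t < m.+1 -> (walk_rows t, walk_cols t) \in agree_edges.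
Proof.
rewrite ltnS => le_tm.
have lt_tL : t.*2 < L by rewrite shortest_walk_length ltnS leq_double.
by have := f_walk lt_tL; rewrite walk_colsE ?walk_rowsE.
Qed.

Lemma walk_rows_next_cols_agree t : t.+1 < m.+1 ->
  (walk_rows t, walk_cols t.+1) \in agree_edges.
Proof.
rewrite ltnS => lt_tm.
have lt_tL : t.*2.+1 < L by rewrite shortest_walk_length ltnS ltn_double.
have := f_walk lt_tL.
by rewrite -doubleS (walk_colsE lt_tm) (walk_rowsE (ltnW lt_tm)).
Qed.

Lemma walk_rows_last : walk_rows m = i0.
Proof. by have := walk_rowsE (leqnn m); rewrite -shortest_walk_length fL => -[]. Qed.

Lemma walk_cols_first : walk_cols 0 = j0.
Proof. by have := walk_colsE (leq0n m); rewrite /= f0 => -[]. Qed.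

Lemma shortest_disagreement_minor : exists g, injective g /\
  absz (\det (colsub g (row_mx B A1))) != absz (\det (colsub g (row_mx B A2))).
Proof.
have m_gt0 := shortest_walk_half_pos.
have agreeE p : p \in agree_edges -> A1 p.1 p.2 != 0 /\ A2 p.1 p.2 = A1 p.1 p.2.
  by rewrite inE => /andP[-> /eqP].
exists (mixed_cols (cycle_cols m.+1 walk_rows walk_cols)); split.
  exact: cycle_cols_inj walk_rows_inj walk_cols_inj.
apply: (cycle_minor_absz_neq B_diag B_nz _ walk_rows_inj).
- by rewrite ltnS.
- exact: walk_cycle_support.
- by move=> s t lts ltt; rewrite support_A2; apply: walk_cycle_support.
- move=> [|t] ltt; split; try exact: (agreeE _ (walk_rows_cols_agree ltt)).1.
    by rewrite /= walk_rows_last walk_cols_first disagree_nz.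
  exact: (agreeE _ (walk_rows_next_cols_agree ltt)).1.
- by move=> t ltt; rewrite (agreeE _ (walk_rows_cols_agree ltt)).2.
- by move=> t ltt; rewrite (agreeE _ (walk_rows_next_cols_agree ltt)).2.
- by rewrite walk_rows_last walk_cols_first disagree_opp.
Qed.

End ShortestDisagreementWalk.

Lemma disagreement_minor :
  (exists i j, A1 i j != A2 i j /\ connect (bip_adj agree_edges) (inr j) (inl i)) ->
  exists g, injective g /\
    absz (\det (colsub g (row_mx B A1))) != absz (\det (colsub g (row_mx B A2))).
Proof.
move=> [i [j [disagree_ij conn_ij]]].
have [L [[i0 [j0 [disagree0 [f [f0 fL f_walk]]]]] f_min]] :
    exists L, disagreement_walk L /\ forall m, disagreement_walk m -> (L <= m)%N.
  by apply: ex_minimal; have [L walk_ij] := connect_walk conn_ij; exists L, i, j.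
exact: shortest_disagreement_minor disagree0 f0 fL f_walk f_min.
Qed.

End Disagreement.

Theorem lemma3p5 (d n : nat) (B : 'M[int]_(d, d)) (A A' A'' : 'M[int]_(d, n))
    (P : {set 'I_d * 'I_n}) (sigma : 'I_d * 'I_n -> int) :
  (forall i j : 'I_d, i != j -> B i j = 0) ->
  (forall i j : 'I_d, 0 <= B i j) ->
  \rank (mxR B) = d ->
  arith_rk (row_mx B A) setT = d ->
  coordinatizing_path A P ->
  (forall p, p \in P -> sigma p = 1 \/ sigma p = -1) ->
  same_arith_matroid (row_mx B A) (row_mx B A') ->
  same_arith_matroid (row_mx B A) (row_mx B A'') ->
  (forall p, p \in P -> A' p.1 p.2 = sigma p * A p.1 p.2) ->
  (forall p, p \in P -> A'' p.1 p.2 = sigma p * A p.1 p.2) ->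
  row_mx B A' = row_mx B A''.
Proof.
move=> B_diag _ rkB _ [P_sub _ P_conn] sigma_unit XX' XX'' P'E P''E.
have B_nz := diag_full_rank_nz B_diag rkB.
have absA' i j := same_arith_matroid_absz_entry B_diag B_nz i j XX'.
have absA'' i j := same_arith_matroid_absz_entry B_diag B_nz i j XX''.
have absA i j : absz (A'' i j) = absz (A' i j) by rewrite absA' absA''.
have P_agree : P \subset agree_edges A' A''.
  apply/subsetP => p p_in; rewrite inE P'E // P''E // eqxx andbT mulf_neq0 //.
    by case: (sigma_unit p p_in) => ->; rewrite ?oppr_eq0 oner_eq0.
  by move/subsetP: P_sub => /(_ p p_in); rewrite inE.
have P_agree_conn : subrel (connect (bip_adj P)) (connect (bip_adj (agree_edges A' A''))).
  by apply: connect_sub => u v /(bip_adj_subset P_agree) /connect1.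
congr row_mx; apply/matrixP => i j; apply/eqP; apply: contraT => disagree_ij.
case: (disagreement_minor B_diag B_nz absA) => [|g [g_inj]].
  exists i, j; split=> //; apply: P_agree_conn; rewrite -P_conn connect1 //= inE.
  by rewrite -absz_eq0 -absA' absz_eq0 (disagree_nz absA disagree_ij).
rewrite -(same_arith_matroid_absz_det XX' g_inj).
by rewrite -(same_arith_matroid_absz_det XX'' g_inj) eqxx.
Qed.
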